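(* Let $K\ge2$, $N\ge1$, $z^\star\in\{1,\dots,K\}^N$, let $P^\star$ be a real $K\times K$ matrix, and let $X=(X_{ij})_{i,j\le N}$ be a random matrix with integrable entries satisfying $\mathbb{E}[X_{ij}]=P^\star_{z^\star_iz^\star_j}$ for all $i,j$. Then for every deterministic $z\in\{1,\dots,K\}^N$, $$\Delta_N(z^\star,z)\,\overline{\delta}(z)\le\frac{2K}{K-1}\,\overline L_N(z),$$ so in particular $\Delta_N(z^\star,z)\le\frac{2K}{(K-1)\overline\delta(z)}\overline L_N(z)$ whenever $\overline\delta(z)>0$. Moreover $\overline L_N(z^\star)=0$.
   Context: Notation: $I_p(z)=\{i: z_i=p\}$, $N_p(z)=|I_p(z)|$. $\widehat\mu_{iq}(z)=\frac{1}{N_q(z)}\sum_{j\in I_q(z)}X_{ij}$ if $N_q(z)\ne0$, else $0$; $\widehat\nu_{pj}(z)=\frac{1}{N_p(z)}\sum_{i\in I_p(z)}X_{ij}$ if $N_p(z)\ne0$, else $0$; $\widehat P_{pq}(z)=\frac{1}{N_p(z)N_q(z)}\sum_{i\in I_p(z)}\sum_{j\in I_q(z)}X_{ij}$ if $N_p(z)N_q(z)\ne0$, else $0$. For deterministic $z$: $\overline\mu_{iq}(z)=\mathbb{E}[\widehat\mu_{iq}(z)]$, $\overline\nu_{qi}(z)=\mathbb{E}[\widehat\nu_{qi}(z)]$, $\overline P_{pq}(z)=\mathbb{E}[\widehat P_{pq}(z)]$. $\overline L_N(z)=\frac1N\sum_{i=1}^N\sum_{q=1}^K\big(|\overline\mu_{iq}(z)-\overline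 P_{z_iq}(z)|+|\overline\nu_{qi}(z)-\overline P_{qz_i}(z)|\big)$. $\overline{\delta}(z)=\min_{p_1\ne p_2}\max_q\big(|\overline P_{p_1q}(z)-\overline P_{p_2q}(z)|+|\overline P_{qp_1}(z)-\overline P_{qp_2}(z)|\big)$. $\Delta_N(z,z')=\frac{K}{N^2(K-1)}\sum_{i,j=1}^N\mathbb{1}_{z_i=z_j}\mathbb{1}_{z'_i\neq z'_j}$. *)

From HB Require Import structures.
From mathcomp Require Import all_boot all_order all_algebra.
From mathcomp Require Import all_classical all_reals all_analysis.
Set Implicit Arguments. Unset Strict Implicit. Unset Printing Implicit Defensive.
Import Order.TTheory GRing.Theory Num.Theory.
Local Open Scope ring_scope.

Section SBM.
Variables (R : realType) (d : measure_display) (T : measurableType d)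
  (P : probability T R) (K N : nat).

Definition Ip (z : 'I_N -> 'I_K) (p : 'I_K) := [set i : 'I_N | z i == p].
Definition Np (z : 'I_N -> 'I_K) (p : 'I_K) : nat := #|Ip z p|.

Variable X : 'I_N -> 'I_N -> T -> R.

Definition hmu (z : 'I_N -> 'I_K) (i : 'I_N) (q : 'I_K) : T -> R :=
  fun w => if Np z q != 0%N
           then (Np z q)%:R^-1 * \sum_(j in Ip z q) X i j w else 0.
Definition hnu (z : 'I_N -> 'I_K) (p : 'I_K) (j : 'I_N) : T -> R :=
  fun w => if Np z p != 0%N
           then (Np z p)%:R^-1 * \sum_(i in Ip z p) X i j w else 0.
Definition hP (z : 'I_N -> 'I_K) (p q : 'I_K) : T -> R :=
  fun w => if (Np z p * Np z q != 0)%N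
           then ((Np z p)%:R * (Np z q)%:R)^-1 *
                \sum_(i in Ip z p) \sum_(j in Ip z q) X i j w else 0.

Definition Er (Y : T -> R) : R := fine ('E_P[Y])%E.

Definition bmu z i q := Er (hmu z i q).
Definition bnu z q i := Er (hnu z q i).
Definition bP z p q := Er (hP z p q).

Definition barL (z : 'I_N -> 'I_K) : R :=
  N%:R^-1 * \sum_(i < N) \sum_(q < K)
     (`|bmu z i q - bP z (z i) q| + `|bnu z q i - bP z q (z i)|).

Definition finmax (s : seq R) : R := foldr Num.max (head 0 s) s.
Definition finmin (s : seq R) : R := foldr Num.min (head 0 s) s.

Definition bdelta (z : 'I_N -> 'I_K) : R :=
  finmin [seq finmax [seq `|bP z pr.1 q - bP z pr.2 q| + `|bP z q pr.1 - bP z q pr.2|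
                     | q <- enum 'I_K]
         | pr <- enum [pred pr : 'I_K * 'I_K | pr.1 != pr.2]].

End SBM.

Definition DeltaN (K N : nat) (z z' : 'I_N -> 'I_K) {R : realType} : R :=
  K%:R / (N%:R ^+ 2 * (K%:R - 1)) *
  \sum_(i < N) \sum_(j < N) ((z i == z j) && (z' i != z' j))%:R.

From HB Require Import structures.
From mathcomp Require Import all_boot all_order all_algebra.
From mathcomp Require Import all_classical all_reals all_analysis.
From mathcomp Require Import ring.
Import Order.TTheory GRing.Theory Num.Theory.
Local Open Scope ring_scope.

(* By linearity, the expected block averages [bmu], [bnu], [bP] are averages
   of entries of the mean matrix [Ps (zs i) (zs j)], so the rows [bmu z i] and
   [bnu z i] of a node only depend on its true class [zs i].  If two nodes share
   a true class but [z] separates them, the triangle inequality through these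
   common rows bounds [bdelta z] by the sum of their row losses; summing over
   all such pairs gives the bound.  For [z = zs] every average is a single block
   value, so the loss vanishes. *)

Section ExpectationOfSums.
Context {R : realType} {d : measure_display} {T : measurableType d}
  {P : probability T R}.

Lemma Lfun_expectation_sum {I : Type} (s : seq I) (Q : pred I)
    {f : I -> T -> R} {m : I -> R} :
  (forall j, f j \in Lfun P 1) -> (forall j, ('E_P[f j] = (m j)%:E)%E) ->
  (fun w => \sum_(j <- s | Q j) f j w) \in Lfun P 1 /\
  ('E_P[fun w => (\sum_(j <- s | Q j) f j w)%R] = (\sum_(j <- s | Q j) m j)%:E)%E.
Proof.
move=> fint Ef; elim: s => [|a s [IHint IHE]].
  rewrite big_nil (_ : (fun _ => _) = cst 0); last by apply: funext => w; rewrite big_nil.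
  by rewrite expectation_cst; split => //; exact: Lfun_cst.
rewrite big_cons; case: ifP => Qa.
  have -> : (fun w => \sum_(j <- a :: s | Q j) f j w) =
            f a \+ (fun w => \sum_(j <- s | Q j) f j w).
    by apply: funext => w; rewrite big_cons Qa.
  by split; [exact: rpredD | rewrite expectationD // Ef IHE].
have -> : (fun w => \sum_(j <- a :: s | Q j) f j w) =
          (fun w => \sum_(j <- s | Q j) f j w).
  by apply: funext => w; rewrite big_cons Qa.
by [].
Qed.

Lemma Er_scaled_sum {I : Type} (s : seq I) (Q : pred I)
    {f : I -> T -> R} {m : I -> R} {c : R} :
  (forall j, f j \in Lfun P 1) -> (forall j, ('E_P[f j] = (m j)%:E)%E) ->
  Er P (fun w => c * \sum_(j <- s | Q j) f j w) = c * \sum_(j <- s | Q j) m j.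
Proof.
move=> fint Ef; have [sint Esum] := Lfun_expectation_sum s Q fint Ef.
rewrite /Er (_ : (fun w => _) = c \o* (fun w => \sum_(j <- s | Q j) f j w)).
  by rewrite expectationZl // Esum.
by apply: funext => w /=; rewrite mulrC.
Qed.

Lemma Er_cst0 : @Er R d T P (fun _ => 0) = 0.
Proof. by rewrite /Er (_ : (fun _ => 0) = cst 0) // expectation_cst. Qed.

End ExpectationOfSums.

Lemma finmin_le {R : realType} {s : seq R} {x : R} : x \in s -> finmin s <= x.
Proof.
rewrite /finmin; elim: s (head 0 s) => [//|y s IH] a.
by rewrite inE /= ge_min => /orP [/eqP ->|/IH ->]; rewrite ?lexx ?orbT.
Qed.

Lemma finmax_le {R : realType} (s : seq R) B :
  0 <= B -> {in s, forall x, x <= B} -> finmax s <= B.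
Proof.
move=> B0 sB; have : head 0 s <= B by case: s sB => //= y s sB; rewrite sB ?mem_head.
rewrite /finmax; move: (head 0 s) => a aB; elim: s sB => //= x s IH sB.
rewrite ge_max sB ?mem_head //= IH // => u su.
by rewrite sB // inE su orbT.
Qed.

Lemma ler_dist_common {R : numDomainType} (u x y : R) :
  `|x - y| <= `|u - x| + `|u - y|.
Proof. by rewrite (le_trans (ler_distD u x y)) // distrC. Qed.

Lemma sum_pair_add {R : comPzRingType} {n} (f : 'I_n -> R) :
  \sum_(i < n) \sum_(j < n) (f i + f j) = 2 * n%:R * \sum_(i < n) f i.
Proof.
under eq_bigr => i _ do rewrite big_split /= sumr_const card_ord -mulr_natr.
by rewrite big_split /= -mulr_suml sumr_const card_ord -mulr_natr; ring.
Qed.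

Lemma mean_block_const {R : numFieldType} {K N} (z : 'I_N -> 'I_K) p (f : 'I_N -> R) c :
  Np z p != 0%N -> {in Ip z p, forall j, f j = c} ->
  (Np z p)%:R^-1 * \sum_(j in Ip z p) f j = c.
Proof.
move=> Np0 fc; rewrite (eq_bigr (fun _ => c)) // sumr_const -/(Np z p).
by rewrite -[c *+ _]mulr_natl mulKf // pnatr_eq0.
Qed.

Section BlockAverages.
Context (R : realType) (d : measure_display) (T : measurableType d)
  (P : probability T R) (K N : nat) (zs : 'I_N -> 'I_K) (Ps : 'I_K -> 'I_K -> R)
  (X : 'I_N -> 'I_N -> T -> R).
Hypothesis Xint : forall i j, X i j \in Lfun P 1.
Hypothesis EX : forall i j, ('E_P[X i j] = (Ps (zs i) (zs j))%:E)%E.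
Implicit Types z : 'I_N -> 'I_K.

Lemma bmuE z i q : bmu P X z i q =
  if Np z q != 0%N then (Np z q)%:R^-1 * \sum_(j in Ip z q) Ps (zs i) (zs j) else 0.
Proof.
by rewrite /bmu /hmu; case: ifP => _; [exact: Er_scaled_sum | exact: Er_cst0].
Qed.

Lemma bnuE z p j : bnu P X z p j =
  if Np z p != 0%N then (Np z p)%:R^-1 * \sum_(i in Ip z p) Ps (zs i) (zs j) else 0.
Proof.
rewrite /bnu /hnu; case: ifP => _; last exact: Er_cst0.
exact: (Er_scaled_sum _ _ (fun i => Xint i j) (fun i => EX i j)).
Qed.

Lemma bPE z p q : bP P X z p q =
  if (Np z p * Np z q != 0)%N then ((Np z p)%:R * (Np z q)%:R)^-1 *
     \sum_(i in Ip z p) \sum_(j in Ip z q) Ps (zs i) (zs j) else 0.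
Proof.
rewrite /bP /hP; case: ifP => _; last exact: Er_cst0.
have rowE i := Lfun_expectation_sum (index_enum 'I_N) (mem (Ip z q)) (Xint i) (EX i).
exact: (Er_scaled_sum _ _ (fun i => (rowE i).1) (fun i => (rowE i).2)).
Qed.

Lemma bmu_class z i j q : zs i = zs j -> bmu P X z i q = bmu P X z j q.
Proof. by move=> ij; rewrite !bmuE ij. Qed.

Lemma bnu_class z i j p : zs i = zs j -> bnu P X z p i = bnu P X z p j.
Proof. by move=> ij; rewrite !bnuE ij. Qed.

Lemma bmu_true i q :
  bmu P X zs i q = if Np zs q != 0%N then Ps (zs i) q else 0.
Proof.
rewrite bmuE; case: ifP => // q0.
by apply: mean_block_const => // j; rewrite inE => /eqP ->.
Qed.

Lemma bnu_true p j :
  bnu P X zs p j = if Np zs p != 0%N then Ps p (zs j) else 0.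
Proof.
rewrite bnuE; case: ifP => // p0.
by apply: mean_block_const => // i; rewrite inE => /eqP ->.
Qed.

Lemma bP_true p q :
  bP P X zs p q = if (Np zs p * Np zs q != 0)%N then Ps p q else 0.
Proof.
rewrite bPE; case: ifP => //; rewrite muln_eq0 negb_or => /andP [p0 q0].
rewrite invfM -mulrA mulr_sumr; apply: mean_block_const => // i; rewrite inE => /eqP zi.
by apply: mean_block_const => // j; rewrite inE => /eqP zj; rewrite zi zj.
Qed.

Lemma Np_label_neq0 z i : Np z (z i) != 0%N.
Proof. by rewrite -lt0n; apply/card_gt0P; exists i; rewrite inE. Qed.

Lemma barL_true_labels : barL P X zs = 0.
Proof.
rewrite /barL big1 ?mulr0 // => i _; rewrite big1 // => q _.
rewrite bmu_true bnu_true !bP_true muln_eq0 mulnC muln_eq0 (negbTE (Np_label_neq0 zs i)).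
by rewrite !subrr normr0 addr0.
Qed.

Definition row_loss z i := \sum_(q < K)
  (`|bmu P X z i q - bP P X z (z i) q| + `|bnu P X z q i - bP P X z q (z i)|).

Lemma row_loss_ge0 z i : 0 <= row_loss z i.
Proof. by apply: sumr_ge0 => q _; rewrite addr_ge0. Qed.

Lemma bdelta_le_row_loss z i j : zs i = zs j -> z i != z j ->
  bdelta P X z <= row_loss z i + row_loss z j.
Proof.
move=> ij zij; rewrite /bdelta.
have zij_pair : (z i, z j) \in enum [pred pr : 'I_K * 'I_K | pr.1 != pr.2].
  by rewrite mem_enum.
pose sep (pr : 'I_K * 'I_K) := finmax [seq `|bP P X z pr.1 q - bP P X z pr.2 q| +
  `|bP P X z q pr.1 - bP P X z q pr.2| | q <- enum 'I_K].
apply: le_trans (finmin_le (map_f sep zij_pair)) _.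
apply: finmax_le; first by rewrite addr_ge0 ?row_loss_ge0.
move=> _ /mapP [q _ ->] /=.
have row_term k : `|bmu P X z k q - bP P X z (z k) q| +
    `|bnu P X z q k - bP P X z q (z k)| <= row_loss z k.
  by rewrite /row_loss (bigD1 q) //= lerDl sumr_ge0 // => q' _; rewrite addr_ge0.
apply: le_trans (lerD (row_term i) (row_term j)).
rewrite addrACA (bmu_class z i j q ij) (bnu_class z i j q ij).
by rewrite lerD ?ler_dist_common.
Qed.

Lemma pair_count_bdelta_le z :
  (\sum_(i < N) \sum_(j < N) ((zs i == zs j) && (z i != z j))%:R) * bdelta P X z
  <= 2 * N%:R * \sum_(i < N) row_loss z i.
Proof.
rewrite -sum_pair_add mulr_suml; apply: ler_sum => i _; rewrite mulr_suml.
apply: ler_sum => j _; case: andP => [[/eqP ij zij]|_].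
  by rewrite mul1r bdelta_le_row_loss.
by rewrite mul0r addr_ge0 ?row_loss_ge0.
Qed.

Hypothesis K_ge2 : (2 <= K)%N.
Hypothesis N_gt0 : (0 < N)%N.

Lemma DeltaN_bdelta_le z :
  DeltaN zs z * bdelta P X z <= (2 * K%:R) / (K%:R - 1) * barL P X z.
Proof.
have K1_gt0 : 0 < K%:R - 1 :> R by rewrite subr_gt0 ltr1n.
have N_neq0 : N%:R != 0 :> R by rewrite pnatr_eq0 -lt0n.
rewrite /DeltaN -[_ * bdelta _ _ _]mulrA.
apply: le_trans (ler_wpM2l _ (pair_count_bdelta_le z)) _.
  by rewrite divr_ge0 ?mulr_ge0 ?exprn_ge0 ?ler0n ?(ltW K1_gt0).
rewrite (_ : barL P X z = N%:R^-1 * \sum_(i < N) row_loss z i) //.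
move: (\sum_(i < N) _) => L; rewrite le_eqVlt; apply/orP; left; apply/eqP.
by field; rewrite N_neq0 gt_eqF.
Qed.

Lemma DeltaN_le z : 0 < bdelta P X z ->
  DeltaN zs z <= (2 * K%:R) / ((K%:R - 1) * bdelta P X z) * barL P X z.
Proof.
move=> bdelta_gt0; rewrite -(ler_pM2r bdelta_gt0); apply: le_trans (DeltaN_bdelta_le z) _.
have K1_gt0 : 0 < K%:R - 1 :> R by rewrite subr_gt0 ltr1n.
rewrite le_eqVlt; apply/orP; left; apply/eqP.
by field; rewrite !gt_eqF.
Qed.

End BlockAverages.

Theorem mainTheorem2 (R : realType) (d : measure_display) (T : measurableType d)
  (P : probability T R) (K N : nat) (hK : (2 <= K)%N) (hN : (1 <= N)%N)
  (zs : 'I_N -> 'I_K) (Ps : 'I_K -> 'I_K -> R)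
  (X : 'I_N -> 'I_N -> T -> R)
  (hint : forall i j, X i j \in Lfun P 1)
  (hE : forall i j, ('E_P[X i j] = (Ps (zs i) (zs j))%:E)%E) :
  (forall z : 'I_N -> 'I_K,
     DeltaN zs z * bdelta P X z <= (2 * K%:R) / (K%:R - 1) * barL P X z
     /\ (0 < bdelta P X z ->
         DeltaN zs z <= (2 * K%:R) / ((K%:R - 1) * bdelta P X z) * barL P X z))
  /\ barL P X zs = 0.
Proof.
split; last exact: barL_true_labels hint hE.
move=> z; split; first exact: DeltaN_bdelta_le hint hE hK hN z.
exact: DeltaN_le hint hE hK hN z.
Qed.
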